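(* Let $r:\mathbb X\to[0,1)$ and $\alpha=\frac{r}{1-r}:\mathbb X\to[0,\infty)$. Suppose that, for all $x\in\mathbb X$, \[ |z(x)|\prod_{\substack{X\Subset\mathbb X:\\ x\in X}}\max\Big\{|W(X)|,\ 1+|W(X)-1|\,\alpha^S \ \Big|\ \varnothing\neq S\subset X\setminus\{x\}\Big\}\le r(x). \] Then for every $\Lambda\Subset\mathbb X$ one has $Z(\Lambda)\neq 0$, and $\sup_{\Lambda\Subset\mathbb X\setminus\{x\}}|\widehat z(x,\Lambda)|\le r(x)<1$ for all $x\in\mathbb X$. Moreover, for all $\Lambda\Subset\mathbb X$, \[ 0<(1-r)^\Lambda\le|Z(\Lambda)|\le(1+r)^\Lambda . \]
   Context: $\mathbb X$ is a finite or countably infinite set; $X\Subset\mathbb X$ means $X$ is a finite subset of $\mathbb X$, and $\mathbf F$ denotes the set of finite subsets of $\mathbb X$. Fix an activity $z:\mathbb X\to\mathbb C$ and an interaction $W:\mathbf F\to\mathbb C$; write $W(x)=W(\{x\})$. For a function $f$ on $\mathbb X$ and $X\Subset\mathbb X$ write $f^X=\prod_{x\in X}f(x)$ (empty products equal $1$); e.g. $(1-r)^\Lambda=\prod_{x\in\Lambda}(1-r(x))$. The Boltzmann factor is $\kappa(X)=\prod_{S\subset X,\,S\neq\varnothing}W(S)$. For $\Lambda\Subset\mathbb X$ the partition function is $Z(\Lambda)=\sum_{X\subset\Lambda}z^X\kappa(X)$; for $x\in\mathbb X\setminus\Lambda$ the pinned partition function is $Z(x,\Lambda)=\sum_{Y\subset\Lambda}z^{\{x\}\cup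 Y}\kappa(\{x\}\cup Y)$ and, when $Z(\Lambda)\neq0$, the effective activity is $\widehat z(x,\Lambda)=Z(x,\Lambda)/Z(\Lambda)$. In the displayed maximum, the max is taken over $|W(X)|$ together with all numbers $1+|W(X)-1|\alpha^S$ for nonempty $S\subset X\setminus\{x\}$ (so for $X=\{x\}$ the factor is $|W(x)|$). The product over all finite $X\ni x$ is a product of nonnegative numbers, understood in $[0,\infty]$. *)

From HB Require Import structures.
From mathcomp Require Import all_boot all_order all_algebra.
From mathcomp Require Import finmap.
From mathcomp.real_closed Require Import complex.
From mathcomp Require Import reals.
Set Implicit Arguments. Unset Strict Implicit. Unset Printing Implicit Defensive.
Import Order.TTheory GRing.Theory Num.Theory.
Local Open Scope ring_scope.


Section Defs.
Variables (R : realType) (T : countType).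
Variables (z : T -> R[i]) (W : {fset T} -> R[i]).

Definition fprod (f : T -> R[i]) (X : {fset T}) : R[i] := \prod_(x <- X) f x.
Definition fprodR (f : T -> R) (X : {fset T}) : R := \prod_(x <- X) f x.

Definition kappa (X : {fset T}) : R[i] :=
  \prod_(S <- fpowerset X | S != fset0%fset) W S.

Definition Zpart (L : {fset T}) : R[i] :=
  \sum_(X <- fpowerset L) fprod z X * kappa X.

Definition Zpin (x : T) (L : {fset T}) : R[i] :=
  \sum_(Y <- fpowerset L) fprod z (x |` Y)%fset * kappa (x |` Y)%fset.

Definition zhat (x : T) (L : {fset T}) : R[i] := Zpin x L / Zpart L.

Definition wfactor (alpha : T -> R) (x : T) (X : {fset T}) : R :=
  \big[Num.max/Normc.normc (W X)]_(S <- fpowerset (X `\ x)%fset | S != fset0%fset)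
     (1 + Normc.normc (W X - 1) * fprodR alpha S).

End Defs.

From Pilot Require Import Defs.
From HB Require Import structures.
From mathcomp Require Import all_boot all_order all_algebra.
From mathcomp Require Import finmap.
From mathcomp.real_closed Require Import complex.
From mathcomp Require Import reals.
From mathcomp Require Import ring lra.
Import Order.TTheory GRing.Theory Num.Theory.
Set Implicit Arguments. Unset Strict Implicit. Unset Printing Implicit Defensive.
Local Open Scope fset_scope.
Local Open Scope ring_scope.

(* Write Z(V, L) for the sum over Y ⊆ L of z^(V ∪ Y) κ(V ∪ Y), so that Z(Λ) = Z(∅, Λ)
   and Z(x, Λ) = Z({x}, Λ).  The heart of the proof is the ratio bound
   |Z({x} ∪ V, L)| <= r(x) |Z(V, L)|, proved by induction on |L| simultaneously for
   all interactions W.  Pinning x factors out z(x) W({x}) and replaces W(S) by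
   W(S) W({x} ∪ S) for every nonempty S ⊆ V ∪ L.  Multiplying W at a single S by c
   changes Z(V, L) by (c - 1) Z(V ∪ (S ∩ L), L \ S), and moving the points of
   U = S ∩ L into the pinned set one at a time costs a factor α each (the ratio
   bound for L \ u and Z(V, L) = Z(V, L \ u) + Z({u} ∪ V, L \ u) give r/(1 - r)).
   So every change costs at most max{|c|, 1 + |c - 1| α^U}, and the product of these
   costs is exactly what the hypothesis controls; it survives pinning because these
   factors are submultiplicative.  Finally Z({u} ∪ Λ) = Z(Λ) + Z(u, Λ) yields the
   bounds (1 - r)^Λ <= |Z(Λ)| <= (1 + r)^Λ by induction on Λ. *)

Section NormcTheory.
Variable R : rcfType.
Local Notation nc := (@Normc.normc R).

Lemma normc_ge0 (x : R[i]) : 0 <= nc x.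
Proof. by case: x => a b; rewrite /Normc.normc sqrtr_ge0. Qed.

Lemma lerB_normcD (x y : R[i]) : nc x - nc y <= nc (x + y).
Proof.
rewrite lerBlDr; have := le_normcD (x + y) (- y).
by rewrite addrK normcN.
Qed.

End NormcTheory.

Section FpowersetBig.
Variables (T : choiceType) (M : Type) (idx : M) (op : Monoid.com_law idx).

Lemma big_fpowerset_supset (U L : {fset T}) (F : {fset T} -> M) : U `<=` L ->
  \big[op/idx]_(Y <- fpowerset L | U `<=` Y) F Y =
  \big[op/idx]_(Y <- fpowerset (L `\` U)) F (U `|` Y).
Proof.
move=> UL; rewrite big_fset_condE.
have -> : [fset Y in fpowerset L | U `<=` Y] =
          [fset U `|` Y | Y in fpowerset (L `\` U)].
  apply/fsetP => Y; apply/idP/idP => [|/imfsetP[Y' /=]].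
    rewrite !inE /= fpowersetE => /andP[YL UY]; apply/imfsetP.
    exists (Y `\` U); first by rewrite /= fpowersetE fsetSD.
    by rewrite fsetUDl fsetDv fsetD0; apply/esym/fsetUidPr.
  rewrite fpowersetE => Y'L ->; rewrite !inE /= fpowersetE fsubsetUl andbT.
  by rewrite fsubUset UL (fsubset_trans Y'L) ?fsubsetDl.
have UYK Y : Y `<=` L `\` U -> (U `|` Y) `\` U = Y.
  by case/fsubsetDP => _ /fsetDidPl YU; rewrite fsetDUl fsetDv fset0U.
rewrite big_imfset //= => Y1 Y2; rewrite !fpowersetE => /UYK e1 /UYK e2 e.
by rewrite -e1 -e2 e.
Qed.

Lemma big_fpowersetU1 (x : T) (A : {fset T}) (F : {fset T} -> M) : x \notin A ->
  \big[op/idx]_(S <- fpowerset (x |` A)) F S =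
  op (\big[op/idx]_(S <- fpowerset A) F S) (\big[op/idx]_(S <- fpowerset A) F (x |` S)).
Proof.
move=> xA; rewrite (big_fsetID _ (fun S : {fset T} => [fset x] `<=` S)) /= Monoid.mulmC.
congr (op _ _); last first.
  by rewrite -big_fset_condE big_fpowerset_supset ?fsub1set ?fset1U1 ?fsetU1K.
by apply: eq_fbigl => S; rewrite !inE /= !fpowersetE fsub1set -fsubsetD1 fsetU1K.
Qed.

Lemma big_fpowersetD1 (x : T) (L : {fset T}) (F : {fset T} -> M) : x \in L ->
  \big[op/idx]_(S <- fpowerset L) F S =
  op (\big[op/idx]_(S <- fpowerset (L `\ x)) F S)
     (\big[op/idx]_(S <- fpowerset (L `\ x)) F (x |` S)).
Proof. by move=> xL; rewrite -big_fpowersetU1 ?fsetD1K // !inE eqxx. Qed.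

Lemma big_fsetU_imfset1U (x : T) (F : {fset {fset T}}) (f : {fset T} -> M) :
  (forall X, X \in F -> x \notin X) ->
  \big[op/idx]_(X <- F `|` [fset x |` X | X in F]) f X =
  \big[op/idx]_(X <- F) op (f X) (f (x |` X)).
Proof.
move=> xF; rewrite big_split (big_fsetID _ (fun X : {fset T} => x \in X)) /= Monoid.mulmC.
congr (op _ _).
  apply: eq_fbigl => X; rewrite !inE /=.
  apply/andP/idP => [[/orP[//|/imfsetP[Y /= _ ->]]]|XF]; last by rewrite XF xF.
  by rewrite fset1U1.
transitivity (\big[op/idx]_(X <- [fset x |` X | X in F]) f X).
  apply: eq_fbigl => X; rewrite !inE /=.
  apply/andP/idP => [[/orP[/xF/negP//|//]]|XF].
  by split; [rewrite XF orbT | case/imfsetP: XF => Y _ ->; rewrite fset1U1].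
rewrite big_imfset //= => X Y /xF xX /xF xY /(congr1 (fun A => A `\ x)).
by rewrite !fsetU1K.
Qed.
End FpowersetBig.

Section PinnedPartition.
Variables (R : realType) (T : countType) (z : T -> R[i]).
Implicit Types (W : {fset T} -> R[i]) (x : T) (Q : {fset {fset T}}) (A V L S : {fset T}).

Definition Zpinned W V L : R[i] :=
  \sum_(Y <- fpowerset L) Defs.fprod z (V `|` Y) * kappa W (V `|` Y).

Definition pinned_interaction (x : T) (Q : {fset {fset T}}) W X :=
  if X \in Q then W X * W (x |` X) else W X.

Lemma Zpart_Zpinned W L : Zpart z W L = Zpinned W fset0 L.
Proof. by apply: eq_bigr => Y _; rewrite fset0U. Qed.

Lemma Zpin_Zpinned W x L : Zpin z W x L = Zpinned W [fset x] L.
Proof. by []. Qed.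

Lemma eq_Zpinned W1 W2 V L : W1 =1 W2 -> Zpinned W1 V L = Zpinned W2 V L.
Proof.
by move=> eW; apply: eq_bigr => Y _; congr (_ * _); apply: eq_bigr => X _.
Qed.

Lemma ZpinnedD1 W V L u : u \in L ->
  Zpinned W V L = Zpinned W V (L `\ u) + Zpinned W (u |` V) (L `\ u).
Proof.
move=> uL; rewrite /Zpinned (big_fpowersetD1 _ _ uL); congr (_ + _).
by apply: eq_bigr => Y _; rewrite fsetUCA fsetUA.
Qed.

Lemma kappa_rescale W1 W2 S c A : S != fset0 ->
  W2 S = W1 S * c -> (forall X, X != S -> W2 X = W1 X) ->
  kappa W2 A = kappa W1 A * (if S `<=` A then c else 1).
Proof.
move=> S0 eS eX; rewrite /kappa !big_mkcond /=.
have -> : \prod_(X <- fpowerset A) (if X != fset0 then W2 X else 1) =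
    \prod_(X <- fpowerset A) ((if X != fset0 then W1 X else 1) * (if X == S then c else 1)).
  apply: eq_bigr => X _; case: (eqVneq X S) => [->|XS]; first by rewrite S0 eS.
  by rewrite eX // mulr1.
rewrite big_split /= -big_mkcond; congr (_ * _); case: ifPn => SA.
  by rewrite (bigD1_seq S) ?fpowersetE ?fset_uniq //= eqxx big1 ?mulr1 // => X /negbTE ->.
rewrite big1_fset // => X; rewrite fpowersetE => XA _.
by case: eqP => // XS; rewrite -XS XA in SA.
Qed.

Lemma Zpinned_rescale W1 W2 S c V L : S != fset0 ->
  W2 S = W1 S * c -> (forall X, X != S -> W2 X = W1 X) ->
  S `<=` V `|` L -> [disjoint V & L] ->
  Zpinned W2 V L =
  Zpinned W1 V L + (c - 1) * Zpinned W1 (V `|` (S `&` L)) (L `\` (S `&` L)).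
Proof.
move=> S0 eS eX SVL /fdisjointP VL.
have SVY Y : Y `<=` L -> (S `<=` V `|` Y) = (S `&` L `<=` Y).
  move=> YL; apply/fsubsetP/fsubsetP => SY y.
    rewrite inE => /andP[yS yL]; have := SY y yS.
    by rewrite inE => /orP[/VL|//]; rewrite yL.
  move=> yS; have := fsubsetP SVL y yS; rewrite !inE => /orP[->//|yL].
  by rewrite SY ?orbT // inE yS yL.
pose t Y := Defs.fprod z (V `|` Y) * kappa W1 (V `|` Y).
rewrite /Zpinned (eq_big_seq (fun Y => t Y + (if S `&` L `<=` Y then (c - 1) * t Y else 0))).
  rewrite big_split /= -big_mkcond big_fpowerset_supset ?fsubsetIr // -mulr_sumr.
  by congr (_ + _ * _); apply: eq_bigr => Y _; rewrite /t fsetUA.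
move=> Y; rewrite fpowersetE => YL.
rewrite (kappa_rescale _ S0 eS eX) SVY // /t.
by case: ifP => _; ring.
Qed.

Lemma kappa_pin W x Q A : x \notin A ->
  (forall S, S `<=` A -> S != fset0 -> S \in Q) ->
  kappa W (x |` A) = W [fset x] * kappa (pinned_interaction x Q W) A.
Proof.
move=> xA AQ; rewrite /kappa big_mkcond big_fpowersetU1 //=.
have xS_neq0 S : x |` S != fset0 by apply/fset0Pn; exists x; rewrite fset1U1.
under [X in _ * X]eq_bigr => S _ do rewrite xS_neq0.
rewrite -big_mkcond /= (bigD1_seq fset0) ?fpowersetE ?fsub0set ?fset_uniq //= fsetU0.
rewrite mulrCA -big_split /=; congr (_ * _).
rewrite big_seq_cond [RHS]big_seq_cond; apply: eq_bigr => S /andP[SA S0].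
by rewrite /pinned_interaction AQ -?fpowersetE.
Qed.

Lemma Zpinned_pin W x Q V L : x \notin V `|` L ->
  (forall S, S `<=` V `|` L -> S != fset0 -> S \in Q) ->
  Zpinned W (x |` V) L = z x * W [fset x] * Zpinned (pinned_interaction x Q W) V L.
Proof.
move=> xVL VLQ; rewrite /Zpinned mulr_sumr big_seq [RHS]big_seq.
apply: eq_bigr => Y; rewrite fpowersetE => YL.
have VYVL : V `|` Y `<=` V `|` L by rewrite fsetUS.
have xVY : x \notin V `|` Y by apply: contra xVL; apply: fsubsetP.
rewrite -fsetUA /Defs.fprod big_fsetU1 // (kappa_pin W (Q := Q) xVY); last first.
  by move=> S SVY; apply: VLQ; apply: fsubset_trans VYVL.
exact: mulrACA.
Qed.
End PinnedPartition.

Section Wfactor.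
Variables (R : realType) (T : countType) (a : T -> R) (x : T).
Hypothesis a_ge0 : forall y, 0 <= a y.
Local Notation nc := (@Normc.normc R).

Lemma fprodR_ge0 (S : {fset T}) : 0 <= fprodR a S.
Proof. exact: prodr_ge0. Qed.

Lemma normc_le_wfactor (W : {fset T} -> R[i]) X : nc (W X) <= wfactor W a x X.
Proof. exact: bigmax_ge_id. Qed.

Lemma wfactor_ge0 (W : {fset T} -> R[i]) X : 0 <= wfactor W a x X.
Proof. exact: le_trans (normc_ge0 _) (normc_le_wfactor _ _). Qed.

Lemma le_wfactor (W : {fset T} -> R[i]) X S : S `<=` X `\ x -> S != fset0 ->
  1 + nc (W X - 1) * fprodR a S <= wfactor W a x X.
Proof.
move=> SX S0; apply: (le_bigmax_seq _ _ _ (fun S => 1 + nc (W X - 1) * fprodR a S)) => //.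
by rewrite fpowersetE.
Qed.

Lemma eq_wfactor (W1 W2 : {fset T} -> R[i]) X : W1 X = W2 X ->
  wfactor W1 a x X = wfactor W2 a x X.
Proof. by rewrite /wfactor => ->. Qed.

Lemma wfactor_fset1 (W : {fset T} -> R[i]) : wfactor W a x [fset x] = nc (W [fset x]).
Proof.
rewrite /wfactor fsetDv fpowerset0 big_seq_cond big_pred0 // => S.
by rewrite inE; case: eqP.
Qed.

Lemma wfactor_ge1 (W : {fset T} -> R[i]) y X : y \in X -> y != x -> 1 <= wfactor W a x X.
Proof.
move=> yX yx; apply: le_trans (le_wfactor (S := [fset y]) _ _ _).
- by rewrite lerDl mulr_ge0 ?normc_ge0 ?fprodR_ge0.
- by rewrite fsub1set !inE yx.
- by rewrite -cardfs_eq0 cardfs1.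
Qed.

Lemma wfactor_mul_le (W W' : {fset T} -> R[i]) y X : W' X = W X * W (y |` X) ->
  wfactor W' a x X <= wfactor W a x X * wfactor W a x (y |` X).
Proof.
move=> eW'; set m1 := wfactor W a x X; set m2 := wfactor W a x (y |` X).
rewrite /wfactor big_seq_cond; apply: bigmax_le => [|S].
  by rewrite eW' Normc.normcM ler_pM ?normc_ge0 ?normc_le_wfactor.
rewrite fpowersetE => /andP[SX S0]; set c := fprodR a S.
have c_ge0 : 0 <= c := fprodR_ge0 S.
have WX_le : nc (W X) <= m1 := normc_le_wfactor W X.
have m1_ge : 1 + nc (W X - 1) * c <= m1 := le_wfactor W SX S0.
have m2_ge : 1 + nc (W (y |` X) - 1) * c <= m2.
  by apply: le_wfactor S0; rewrite (fsubset_trans SX) // fsetSD // fsubsetU1.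
have tri : nc (W' X - 1) <= nc (W X) * nc (W (y |` X) - 1) + nc (W X - 1).
  have -> : W' X - 1 = W X * (W (y |` X) - 1) + (W X - 1) by rewrite eW'; ring.
  by rewrite -Normc.normcM le_normcD.
have d_ge0 : 0 <= nc (W (y |` X) - 1) * c by rewrite mulr_ge0 ?normc_ge0.
have m1_ge0 : 0 <= m1 := wfactor_ge0 W X.
have := ler_wpM2r c_ge0 tri; have := ler_wpM2r d_ge0 WX_le; have := ler_wpM2l m1_ge0 m2_ge.
lra.
Qed.

Lemma wfactor_pinned_le (W : {fset T} -> R[i]) y Q X : y != x ->
  wfactor (pinned_interaction y Q W) a x X <= wfactor W a x X * wfactor W a x (y |` X).
Proof.
move=> yx; have [XQ|XQ] := boolP (X \in Q).
  by apply: wfactor_mul_le; rewrite /pinned_interaction XQ.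
rewrite (@eq_wfactor _ W); last by rewrite /pinned_interaction (negbTE XQ).
by rewrite ler_peMr ?wfactor_ge0 // (wfactor_ge1 _ (fset1U1 y X) yx).
Qed.
End Wfactor.

Section RatioBound.
Variables (R : realType) (T : countType) (z : T -> R[i]) (r : T -> R).
Hypothesis r_range : forall x, 0 <= r x < 1.
Local Notation nc := (@Normc.normc R).
Implicit Types (W : {fset T} -> R[i]) (x u : T) (Q : {fset {fset T}}) (D U V L : {fset T}).

Definition alpha x := r x / (1 - r x).

Lemma alpha_ge0 x : 0 <= alpha x.
Proof. by have /andP[r0 r1] := r_range x; rewrite divr_ge0 // subr_ge0 ltW. Qed.

Definition activity_condition W D := forall u, u \in D -> forall F : {fset {fset T}},
  (forall X, X \in F -> (u \in X) && (X `<=` D)) -> [fset u] \in F ->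
  nc (z u) * \prod_(X <- F) wfactor W alpha u X <= r u.

Lemma activity_condition_sub W D D' :
  D `<=` D' -> activity_condition W D' -> activity_condition W D.
Proof.
move=> DD' cond u uD F FD; apply: cond; first exact: fsubsetP uD.
by move=> X /FD /andP[-> XD]; apply: fsubset_trans DD'.
Qed.

Lemma activity_condition_pin W x Q D : x \notin D ->
  activity_condition W (x |` D) -> activity_condition (pinned_interaction x Q W) D.
Proof.
move=> xD cond u uD F FD uF.
have xu : x != u by apply: contraNneq xD => ->.
have xF X : X \in F -> x \notin X.
  by move/FD => /andP[_ XD]; apply: contra xD; apply: fsubsetP.
have := cond u _ (F `|` [fset x |` X | X in F]).
rewrite big_fsetU_imfset1U // => {}cond; apply: le_trans (cond _ _ _).
- rewrite ler_wpM2l ?normc_ge0 // big_seq [leRHS]big_seq ler_prod // => X _.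
  by rewrite wfactor_ge0 ?wfactor_pinned_le //; apply: alpha_ge0.
- by rewrite fset1Ur.
- move=> X; rewrite inE => /orP[/FD/andP[-> XD]|/imfsetP[Y /= /FD/andP[uY YD] ->]].
    by rewrite (fsubset_trans XD) ?fsubsetU1.
  by rewrite fset1Ur // fsetUS.
- by rewrite inE uF.
Qed.

Definition ratio_bound W V L x := x \notin V `|` L -> [disjoint V & L] ->
  activity_condition W (x |` (V `|` L)) ->
  nc (Zpinned z W (x |` V) L) <= r x * nc (Zpinned z W V L).

Section Induction.
Variable n : nat.
Hypothesis ratio_bound_lt : forall W V L x, (#|` L| < n)%N -> ratio_bound W V L x.

Lemma Zpinned_move1_le W V L u : (#|` L| <= n)%N -> u \in L -> u \notin V ->
  [disjoint V & L] -> activity_condition W (V `|` L) ->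
  nc (Zpinned z W (u |` V) (L `\ u)) <= alpha u * nc (Zpinned z W V L).
Proof.
move=> Ln uL uV VL cond.
have ratio : nc (Zpinned z W (u |` V) (L `\ u)) <= r u * nc (Zpinned z W V (L `\ u)).
  apply: ratio_bound_lt.
  - by rewrite (leq_trans _ Ln) // (cardfsD1 u L) uL.
  - by rewrite !inE eqxx (negbTE uV).
  - by apply: fdisjointWr VL; apply: fsubsetDl.
  - by apply: activity_condition_sub cond; rewrite fsetUCA fsetD1K.
have := lerB_normcD (Zpinned z W V (L `\ u)) (Zpinned z W (u |` V) (L `\ u)).
rewrite -ZpinnedD1 //; have /andP[r0 r1] := r_range u.
move=> /(ler_wpM2l r0) diff; rewrite /alpha mulrAC ler_pdivlMr ?subr_gt0 //.
lra.
Qed.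

Lemma Zpinned_move_le W V L U : (#|` L| <= n)%N -> [disjoint V & L] ->
  activity_condition W (V `|` L) -> U `<=` L ->
  nc (Zpinned z W (V `|` U) (L `\` U)) <= fprodR alpha U * nc (Zpinned z W V L).
Proof.
move=> Ln VL cond; elim/fset1U_rect: U => [|u U uU IHU] uUL.
  by rewrite fsetU0 fsetD0 /fprodR big_seq_fset0 mul1r.
have uL : u \in L by apply: (fsubsetP uUL); rewrite fset1U1.
have UL : U `<=` L by apply: fsubset_trans uUL; apply: fsubsetU1.
have uV : u \notin V by apply: (fdisjointP_sym VL).
have step : nc (Zpinned z W (u |` (V `|` U)) ((L `\` U) `\ u)) <=
            alpha u * nc (Zpinned z W (V `|` U) (L `\` U)).
  apply: Zpinned_move1_le.
  - by rewrite (leq_trans _ Ln) // fsubset_leq_card ?fsubsetDl.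
  - by rewrite !inE uU uL.
  - by rewrite !inE (negbTE uV) (negbTE uU).
  - rewrite fdisjointUX (fdisjointWr (fsubsetDl L U) VL) /=.
    by apply/fdisjointP => y yU; rewrite inE yU.
  - apply: activity_condition_sub cond; rewrite -fsetUA fsetUS //.
    by rewrite fsubUset UL fsubsetDl.
have -> : L `\` (u |` U) = (L `\` U) `\ u by rewrite fsetDDl fsetUC.
rewrite fsetUCA /fprodR big_fsetU1 //= -mulrA.
apply: le_trans step _; rewrite ler_wpM2l ?alpha_ge0 //.
exact: IHU.
Qed.

Lemma Zpinned_rescale_le W1 W2 S c m V L : (#|` L| <= n)%N -> [disjoint V & L] ->
  activity_condition W1 (V `|` L) -> S != fset0 -> S `<=` V `|` L ->
  W2 S = W1 S * c -> (forall X, X != S -> W2 X = W1 X) ->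
  nc c <= m -> (forall U, U `<=` S -> U != fset0 -> 1 + nc (c - 1) * fprodR alpha U <= m) ->
  nc (Zpinned z W2 V L) <= m * nc (Zpinned z W1 V L).
Proof.
move=> Ln VL cond S0 SVL eS eX c_le m_ge; rewrite (Zpinned_rescale _ S0 eS eX SVL VL).
have [U0|U0] := eqVneq (S `&` L) fset0.
  rewrite U0 fsetU0 fsetD0 -{1}[Zpinned _ _ _ _]mul1r -mulrDl addrC subrK.
  by rewrite Normc.normcM ler_wpM2r ?normc_ge0.
apply: le_trans (le_normcD _ _) _; rewrite Normc.normcM.
have alpha_le := Zpinned_move_le Ln VL cond (fsubsetIr S L).
have := m_ge _ (fsubsetIl S L) U0.
have := ler_wpM2l (normc_ge0 (c - 1)) alpha_le.
have := normc_ge0 (Zpinned z W1 V L).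
nra.
Qed.

Lemma Zpinned_pinned_le W V L x Q : (#|` L| <= n)%N -> [disjoint V & L] ->
  x \notin V `|` L -> activity_condition W (x |` (V `|` L)) ->
  (forall S, S \in Q -> (S `<=` V `|` L) && (S != fset0)) ->
  nc (Zpinned z (pinned_interaction x Q W) V L) <=
  \prod_(S <- Q) wfactor W alpha x (x |` S) * nc (Zpinned z W V L).
Proof.
move=> Ln VL xVL cond; elim/fset1U_rect: Q => [|S Q SQ IHQ] QVL.
  by rewrite big_seq_fset0 mul1r (@eq_Zpinned _ _ _ _ W).
have /andP[SVL S0] := QVL S (fset1U1 _ _).
have xS : x \notin S by apply: contra xVL; apply: fsubsetP.
rewrite big_fsetU1 //= -mulrA; apply: le_trans (_ : _ <=
  wfactor W alpha x (x |` S) * nc (Zpinned z (pinned_interaction x Q W) V L)) _.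
  apply: (Zpinned_rescale_le (S := S) (c := W (x |` S))) => //.
  - exact: activity_condition_pin.
  - by rewrite /pinned_interaction fset1U1 (negbTE SQ).
  - by move=> X XS; rewrite /pinned_interaction in_fset1U (negbTE XS).
  - exact: normc_le_wfactor.
  - move=> U US U0; apply: le_wfactor U0.
    by rewrite fsubsetD1 (fsubset_trans US) ?fsubsetU1 //; apply: contra xS; apply: fsubsetP.
by rewrite ler_wpM2l ?wfactor_ge0 ?IHQ // => S' S'Q; rewrite QVL // fset1Ur.
Qed.

Lemma ratio_bound_step W V L x : (#|` L| <= n)%N -> ratio_bound W V L x.
Proof.
move=> Ln xVL VL cond.
pose Q := [fset S in fpowerset (V `|` L) | S != fset0].
have QE S : (S \in Q) = (S `<=` V `|` L) && (S != fset0) by rewrite !inE fpowersetE.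
have xS S : S \in fpowerset (V `|` L) -> x \notin S.
  by rewrite fpowersetE => SVL; apply: contra xVL; apply: fsubsetP.
have prodE : \prod_(X <- [fset x |` S | S in fpowerset (V `|` L)]) wfactor W alpha x X =
    nc (W [fset x]) * \prod_(S <- Q) wfactor W alpha x (x |` S).
  rewrite big_imfset => [|S1 S2 /xS xS1 /xS xS2 /(congr1 (fun A => A `\ x))]; last first.
    by rewrite !fsetU1K.
  rewrite (bigD1_seq fset0) ?fpowersetE ?fsub0set ?fset_uniq //= fsetU0 wfactor_fset1.
  by rewrite big_fset_condE.
have cond_x :
    nc (z x) * (nc (W [fset x]) * \prod_(S <- Q) wfactor W alpha x (x |` S)) <= r x.
  rewrite -prodE; apply: cond; first exact: fset1U1.
    by move=> X /imfsetP[S /= SVL ->]; rewrite fset1U1 fsetUS -?fpowersetE.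
  by apply/imfsetP; exists fset0; rewrite ?fsetU0 // fpowersetE fsub0set.
have QVL S : S \in Q -> (S `<=` V `|` L) && (S != fset0) by rewrite QE.
have pinned_le := Zpinned_pinned_le Ln VL xVL cond QVL.
rewrite (@Zpinned_pin _ _ z W x Q) // => [|S SVL S0]; last by rewrite QE SVL.
rewrite !Normc.normcM; apply: le_trans (_ : _ <= nc (z x) * nc (W [fset x]) *
  (\prod_(S <- Q) wfactor W alpha x (x |` S) * nc (Zpinned z W V L))) _.
  by rewrite ler_wpM2l // mulr_ge0 ?normc_ge0.
by rewrite mulrA -(mulrA (nc (z x))) ler_wpM2r ?normc_ge0.
Qed.
End Induction.

Lemma ratio_bound_all W V L x : ratio_bound W V L x.
Proof.
suff ind k : forall W V L x, (#|` L| < k)%N -> ratio_bound W V L x by exact: ind.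
elim: k => // k IHk W' V' L' y; rewrite ltnS; exact: ratio_bound_step.
Qed.

Lemma Zpin_le W x L : x \notin L -> activity_condition W (x |` L) ->
  nc (Zpin z W x L) <= r x * nc (Zpart z W L).
Proof.
move=> xL cond; rewrite Zpin_Zpinned Zpart_Zpinned -[[fset x]]fsetU0.
by apply: ratio_bound_all; rewrite ?fset0U ?fdisjoint0X.
Qed.

Lemma Zpart0 W : Zpart z W fset0 = 1.
Proof.
rewrite /Zpart fpowerset0 big_seq_fset1 /Defs.fprod big_seq_fset0 /kappa fpowerset0.
by rewrite big_mkcond big_seq_fset1 eqxx mul1r.
Qed.

Lemma Zpart_bounds W L : activity_condition W L ->
  fprodR (fun y => 1 - r y) L <= nc (Zpart z W L) <= fprodR (fun y => 1 + r y) L.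
Proof.
elim/fset1U_rect: L => [|u L uL IHL] cond.
  by rewrite Zpart0 Normc.normc1 /fprodR !big_seq_fset0 lexx.
have /andP[lo hi] := IHL (activity_condition_sub (fsubsetU1 u L) cond).
have ratio := Zpin_le uL cond.
have splitZ : Zpart z W (u |` L) = Zpart z W L + Zpin z W u L.
  by rewrite !Zpart_Zpinned (ZpinnedD1 _ _ _ (fset1U1 u L)) fsetU1K // fsetU0.
have Zlower := lerB_normcD (Zpart z W L) (Zpin z W u L).
have Zupper := le_normcD (Zpart z W L) (Zpin z W u L).
rewrite -splitZ in Zlower Zupper.
have /andP[r0 r1] := r_range u; have r_lo : 0 <= 1 - r u by rewrite subr_ge0 ltW.
have lo' := ler_wpM2l r_lo lo; have hi' := ler_wpM2l (addr_ge0 ler01 r0) hi.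
by rewrite /fprodR !big_fsetU1 //= -!/(fprodR _ L); apply/andP; split; lra.
Qed.
End RatioBound.

Theorem theorem2p1 (R : realType) (T : countType)
    (z : T -> R[i]) (W : {fset T} -> R[i]) (r : T -> R) :
  (forall x, 0 <= r x < 1) ->
  let alpha := fun x => r x / (1 - r x) in
  (forall x (F : {fset {fset T}}),
      (forall X, X \in F -> x \in X) ->
      [fset x]%fset \in F ->
      Normc.normc (z x) * \prod_(X <- F) wfactor W alpha x X <= r x) ->
  (forall L : {fset T}, Zpart z W L != 0) /\
  (forall (x : T) (L : {fset T}), x \notin L ->
      Normc.normc (zhat z W x L) <= r x) /\
  (forall x, r x < 1) /\
  (forall L : {fset T},
      0 < fprodR (fun y => 1 - r y) L /\
      fprodR (fun y => 1 - r y) L <= Normc.normc (Zpart z W L) /\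
      Normc.normc (Zpart z W L) <= fprodR (fun y => 1 + r y) L).
Proof.
move=> r_range alpha hyp.
have cond D : activity_condition z r W D by move=> u _ F FD; apply: hyp => X /FD /andP[].
have lo_gt0 L : 0 < fprodR (fun y => 1 - r y) L.
  by apply: prodr_gt0 => y _; case/andP: (r_range y) => _; rewrite subr_gt0.
have Zpart_gt0 L : 0 < Normc.normc (Zpart z W L).
  by case/andP: (Zpart_bounds r_range (cond L)) => lo _; apply: lt_le_trans lo.
split.
  by move=> L; apply/eqP => Z0; have := Zpart_gt0 L; rewrite Z0 Normc.normc0 ltxx.
split.
  move=> x L xL; rewrite /zhat Normc.normcM Normc.normcV ler_pdivrMr //.
  exact: Zpin_le.
split; first by move=> x; case/andP: (r_range x).
move=> L; split; first exact: lo_gt0.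
by apply/andP; have := Zpart_bounds r_range (cond L).
Qed.
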